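(* Let $A$ and $G$ be selfadjoint operators in the Hilbert space $\mathcal H$. Each of the following conditions implies that $\rho(AG)\neq\emptyset$ and $\rho(GA)\neq\emptyset$: (a) $G$ is bounded and $\rho(GA)\neq\emptyset$; (b) $G$ is boundedly invertible and $\rho(AG)\neq\emptyset$; (c) $(AG)^*=GA$ and $\rho(AG)\neq\emptyset$; (d) $\rho(AG)\neq\emptyset$, $GA$ is closed, and for some $\lambda\in\rho(AG)\setminus\{0\}$ the operator $G(AG-\lambda)^{-1}A$ is bounded on $\operatorname{dom}A$.
   Context: $(\mathcal H,(\cdot,\cdot))$ is a complex Hilbert space; $A,G$ are possibly unbounded selfadjoint operators, and $AG$, $GA$ denote the usual operator products with their natural domains. For a linear operator $S$, $\rho(S)$ is the set of $\lambda\in\mathbb C$ such that $S-\lambda$ is injective, $\operatorname{ran}(S-\lambda)=\mathcal H$ and $(S-\lambda)^{-1}$ is bounded and everywhere defined. $S$ is boundedly invertible if $0\in\rho(S)$. *)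

From Stdlib Require Import Reals.
Open Scope R_scope.

Record Cplx : Type := mkC { Re : R; Im : R }.
Definition C0 : Cplx := mkC 0 0.
Definition C1 : Cplx := mkC 1 0.
Definition Cadd (a b : Cplx) : Cplx := mkC (Re a + Re b) (Im a + Im b).
Definition Cmul (a b : Cplx) : Cplx :=
  mkC (Re a * Re b - Im a * Im b) (Re a * Im b + Im a * Re b).
Definition Cconj (a : Cplx) : Cplx := mkC (Re a) (- Im a).
Definition Copp (a : Cplx) : Cplx := mkC (- Re a) (- Im a).

(** * Complex Hilbert spaces
    Inner product linear in the first, conjugate-linear in the second argument. *)
Record HilbertSpace : Type := {
  carrier :> Type;
  hzero : carrier;
  hadd : carrier -> carrier -> carrier;
  hopp : carrier -> carrier;
  hscal : Cplx -> carrier -> carrier;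
  inner : carrier -> carrier -> Cplx;
  hadd_comm : forall x y, hadd x y = hadd y x;
  hadd_assoc : forall x y z, hadd x (hadd y z) = hadd (hadd x y) z;
  hadd_0 : forall x, hadd x hzero = x;
  hadd_opp : forall x, hadd x (hopp x) = hzero;
  hscal_1 : forall x, hscal C1 x = x;
  hscal_assoc : forall a b x, hscal a (hscal b x) = hscal (Cmul a b) x;
  hscal_distr_v : forall a x y, hscal a (hadd x y) = hadd (hscal a x) (hscal a y);
  hscal_distr_s : forall a b x, hscal (Cadd a b) x = hadd (hscal a x) (hscal b x);
  inner_add_l : forall x y z, inner (hadd x y) z = Cadd (inner x z) (inner y z);
  inner_scal_l : forall a x y, inner (hscal a x) y = Cmul a (inner x y);
  inner_conj_sym : forall x y, inner y x = Cconj (inner x y);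
  inner_pos : forall x, 0 <= Re (inner x x);
  inner_definite : forall x, inner x x = C0 -> x = hzero;
  complete : forall u : nat -> carrier,
    (forall eps, 0 < eps -> exists N, forall m n, (N <= m)%nat -> (N <= n)%nat ->
       sqrt (Re (inner (hadd (u m) (hopp (u n))) (hadd (u m) (hopp (u n))))) < eps) ->
    exists l, forall eps, 0 < eps -> exists N, forall n, (N <= n)%nat ->
       sqrt (Re (inner (hadd (u n) (hopp l)) (hadd (u n) (hopp l)))) < eps
}.

Arguments hzero {h}.
Arguments hadd {h}.
Arguments hopp {h}.
Arguments hscal {h}.
Arguments inner {h}.

Section Ops.
Variable H : HilbertSpace.

Definition hsub (x y : H) : H := hadd x (hopp y).
Definition hnorm (x : H) : R := sqrt (Re (inner x x)).

Definition converges (u : nat -> H) (l : H) : Prop :=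
  forall eps, 0 < eps -> exists N, forall n, (N <= n)%nat -> hnorm (hsub (u n) l) < eps.

(** Linear operators in H, represented by their graphs (relations). *)
Definition Op : Type := H -> H -> Prop.

Definition dom (T : Op) (x : H) : Prop := exists y, T x y.

Definition is_linop (T : Op) : Prop :=
  T hzero hzero /\
  (forall x1 y1 x2 y2, T x1 y1 -> T x2 y2 -> T (hadd x1 x2) (hadd y1 y2)) /\
  (forall a x y, T x y -> T (hscal a x) (hscal a y)) /\
  (forall x y1 y2, T x y1 -> T x y2 -> y1 = y2).

Definition dense (P : H -> Prop) : Prop :=
  forall x eps, 0 < eps -> exists y, P y /\ hnorm (hsub x y) < eps.

Definition adjoint (T : Op) : Op :=
  fun y z => forall x w, T x w -> inner w y = inner x z.

Definition op_eq (S T : Op) : Prop := forall x y, S x y <-> T x y.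

Definition selfadjoint (T : Op) : Prop :=
  is_linop T /\ dense (dom T) /\ op_eq (adjoint T) T.

Definition op_mul (S T : Op) : Op := fun x z => exists y, T x y /\ S y z.

Definition op_shift (S : Op) (lam : Cplx) : Op :=
  fun x y => exists w, S x w /\ y = hsub w (hscal lam x).

Definition op_inv (S : Op) : Op := fun x y => S y x.

Definition injective_op (S : Op) : Prop :=
  forall x1 x2 y, S x1 y -> S x2 y -> x1 = x2.

Definition surjective_op (S : Op) : Prop := forall y, exists x, S x y.

Definition bounded_op (S : Op) : Prop :=
  exists M, forall x y, S x y -> hnorm y <= M * hnorm x.

Definition closed_op (S : Op) : Prop :=
  forall (u v : nat -> H) x y,
    (forall n, S (u n) (v n)) -> converges u x -> converges v y -> S x y.

Definition in_resolvent (S : Op) (lam : Cplx) : Prop :=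
  injective_op (op_shift S lam) /\ surjective_op (op_shift S lam) /\
  bounded_op (op_inv (op_shift S lam)).

Definition resolvent_nonempty (S : Op) : Prop := exists lam, in_resolvent S lam.

Definition boundedly_invertible (S : Op) : Prop := in_resolvent S C0.

End Ops.

Arguments dom {H}.
Arguments is_linop {H}.
Arguments adjoint {H}.
Arguments op_eq {H}.
Arguments selfadjoint {H}.
Arguments op_mul {H}.
Arguments op_shift {H}.
Arguments op_inv {H}.
Arguments bounded_op {H}.
Arguments closed_op {H}.
Arguments in_resolvent {H}.
Arguments resolvent_nonempty {H}.
Arguments boundedly_invertible {H}.

(** The common mechanism for (a)-(c) is that [lam] in [rho(T)] gives [conj lam]
    in [rho(adjoint T)] (lemma [resolvent_adjoint], proved with the Riesz
    representation theorem), together with an identification of adjoints: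
    [(GA)^* = AG] when [G] is bounded (hence everywhere defined), and
    [(AG)^* = GA] when [G] is boundedly invertible (or by hypothesis in (c)).
    For (d), the resolvent identity suggests the solution
    [lam^-1 (G (AG - lam)^-1 A x - x)] of [(GA - lam) p = x] on the dense set
    [dom A]; it is bounded by hypothesis and extends to all of [H] because [GA]
    is closed (lemma [closed_shift_onto]). *)

From Stdlib Require Import Reals Lra Psatz Classical IndefiniteDescription.
Open Scope R_scope.

Arguments hsub {H}.
Arguments hnorm {H}.
Arguments converges {H}.
Arguments dense {H}.
Arguments injective_op {H}.
Arguments surjective_op {H}.

Lemma Cext (a b : Cplx) : Re a = Re b -> Im a = Im b -> a = b.
Proof. destruct a, b; simpl; intros; subst; reflexivity. Qed.

Ltac Csimpl := unfold Cadd, Cmul, Cconj, Copp, C0, C1 in *; simpl in *.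
Ltac Cring := apply Cext; Csimpl; ring.

Definition Cmod2 (c : Cplx) : R := Re c * Re c + Im c * Im c.

Lemma Cmod2_nonneg (c : Cplx) : 0 <= Cmod2 c.
Proof. unfold Cmod2. nra. Qed.

Lemma Cmod2_zero (c : Cplx) : Cmod2 c <= 0 -> c = C0.
Proof. unfold Cmod2. intro Hm. destruct c as [a b]. simpl in *. apply Cext; simpl; nra. Qed.

Lemma Cmod2_eq (a b : Cplx) : Cmod2 (Cadd a (Copp b)) <= 0 -> a = b.
Proof.
  intro Hm. apply Cmod2_zero in Hm. destruct a as [a1 a2], b as [b1 b2].
  unfold Cadd, Copp, C0 in Hm. simpl in Hm. injection Hm; intros.
  apply Cext; simpl; lra.
Qed.

Definition Cinv (c : Cplx) : Cplx := mkC (Re c / Cmod2 c) (- Im c / Cmod2 c).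

Lemma Cmod2_pos (c : Cplx) : c <> C0 -> 0 < Cmod2 c.
Proof.
  intro Hc. destruct (Rlt_dec 0 (Cmod2 c)) as [h|h]; [exact h|].
  exfalso. apply Hc, Cmod2_zero. lra.
Qed.

Lemma Cinv_l (c : Cplx) : c <> C0 -> Cmul (Cinv c) c = C1.
Proof.
  intro Hc. pose proof (Cmod2_pos c Hc). unfold Cinv, Cmod2 in *.
  apply Cext; Csimpl; field; lra.
Qed.

Section InnerProduct.
Variable H : HilbertSpace.
Implicit Types x y z w : H.

Lemma hadd_0l x : hadd hzero x = x.
Proof. rewrite hadd_comm; apply hadd_0. Qed.

Lemma inner_zero_l y : inner hzero y = C0.
Proof.
  pose proof (inner_add_l H hzero hzero y) as E. rewrite hadd_0 in E.
  destruct (inner hzero y) as [a b]. unfold Cadd in E. injection E. intros.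
  apply Cext; simpl; lra.
Qed.

Lemma inner_opp_l x y : inner (hopp x) y = Copp (inner x y).
Proof.
  pose proof (inner_add_l H x (hopp x) y) as E. rewrite hadd_opp, inner_zero_l in E.
  destruct (inner x y) as [a b]; destruct (inner (hopp x) y) as [c d].
  unfold Cadd, C0 in E. injection E; intros. apply Cext; simpl; lra.
Qed.

Lemma inner_add_r x y z : inner x (hadd y z) = Cadd (inner x y) (inner x z).
Proof.
  rewrite (inner_conj_sym H (hadd y z) x), inner_add_l,
    (inner_conj_sym H x y), (inner_conj_sym H x z). Cring.
Qed.

Lemma inner_scal_r a x y : inner x (hscal a y) = Cmul (Cconj a) (inner x y).
Proof.
  rewrite (inner_conj_sym H (hscal a y) x), inner_scal_l, (inner_conj_sym H x y). Cring.
Qed.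

Lemma inner_opp_r x y : inner x (hopp y) = Copp (inner x y).
Proof.
  rewrite (inner_conj_sym H (hopp y) x), inner_opp_l, (inner_conj_sym H x y). Cring.
Qed.

Lemma inner_zero_r x : inner x hzero = C0.
Proof. rewrite (inner_conj_sym H hzero x), inner_zero_l. Cring. Qed.

End InnerProduct.

Ltac inner_expand :=
  unfold hsub in *;
  repeat (rewrite ?inner_add_l, ?inner_scal_l, ?inner_opp_l, ?inner_zero_l,
                  ?inner_add_r, ?inner_scal_r, ?inner_opp_r, ?inner_zero_r).

Ltac inner_expand_in P :=
  unfold hsub in P;
  repeat (rewrite ?inner_add_l, ?inner_scal_l, ?inner_opp_l, ?inner_zero_l,
                  ?inner_add_r, ?inner_scal_r, ?inner_opp_r, ?inner_zero_r in P).

Lemma vec_ext {H : HilbertSpace} (x y : H) : (forall w, inner x w = inner y w) -> x = y.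
Proof.
  intro Hw. set (d := hadd x (hopp y)).
  assert (Hd : d = hzero).
  { apply inner_definite. unfold d at 1. rewrite inner_add_l, inner_opp_l, Hw. Cring. }
  unfold d in Hd.
  rewrite <- (hadd_0 H y), <- Hd, (hadd_comm _ x (hopp y)), hadd_assoc, hadd_opp, hadd_0l.
  reflexivity.
Qed.

Lemma vec_ext_r {H : HilbertSpace} (x y : H) : (forall w, inner w x = inner w y) -> x = y.
Proof.
  intro Hw. apply vec_ext. intro w.
  rewrite (inner_conj_sym H w x), (inner_conj_sym H w y), Hw. reflexivity.
Qed.

Ltac vec_eq := apply vec_ext; intro; inner_expand; Cring.

Definition nsq {H : HilbertSpace} (x : H) : R := Re (inner x x).

Section Norm.
Variable H : HilbertSpace.
Implicit Types x y z : H.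

Lemma Im_inner_self x : Im (inner x x) = 0.
Proof.
  pose proof (inner_conj_sym H x x) as E.
  destruct (inner x x) as [a b]. unfold Cconj in E. injection E. simpl. lra.
Qed.

Lemma nsq_nonneg x : 0 <= nsq x.
Proof. apply inner_pos. Qed.

Lemma nsq_eq0 x : nsq x = 0 -> x = hzero.
Proof. intro E. apply inner_definite. apply Cext; [exact E | apply Im_inner_self]. Qed.

Lemma hnorm_sq x : hnorm x * hnorm x = nsq x.
Proof. unfold hnorm. apply sqrt_sqrt. apply nsq_nonneg. Qed.

Lemma hnorm_nonneg x : 0 <= hnorm x.
Proof. unfold hnorm. apply sqrt_pos. Qed.

Lemma cauchy_schwarz x y : Cmod2 (inner x y) <= nsq x * nsq y.
Proof.
  destruct (Req_dec (nsq y) 0) as [E|E].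
  - apply nsq_eq0 in E. subst y. rewrite inner_zero_r. unfold Cmod2, nsq.
    rewrite inner_zero_r. Csimpl. lra.
  - assert (Hn : 0 < nsq y) by (pose proof (nsq_nonneg y); lra).
    pose proof (nsq_nonneg (hsub (hscal (mkC (nsq y) 0) x) (hscal (inner x y) y))) as P.
    unfold nsq in P. inner_expand_in P. rewrite (inner_conj_sym H x y) in P.
    pose proof (Im_inner_self x). pose proof (Im_inner_self y).
    unfold nsq, Cmod2 in *.
    destruct (inner x y) as [a b]; destruct (inner x x) as [c d];
    destruct (inner y y) as [e f]. Csimpl. subst d f.
    assert (0 <= e * (e * c - (a*a+b*b))) by nra.
    assert (0 <= e * c - (a*a+b*b)) by nra. nra.
Qed.

Lemma Re_inner_le x y : Rabs (Re (inner x y)) <= hnorm x * hnorm y.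
Proof.
  pose proof (cauchy_schwarz x y) as C. unfold Cmod2 in C.
  pose proof (hnorm_sq x). pose proof (hnorm_sq y).
  pose proof (hnorm_nonneg x). pose proof (hnorm_nonneg y).
  assert (Re (inner x y) * Re (inner x y) <= (hnorm x * hnorm y) * (hnorm x * hnorm y)).
  { replace ((hnorm x * hnorm y) * (hnorm x * hnorm y))
      with ((hnorm x * hnorm x) * (hnorm y * hnorm y)) by ring. nra. }
  assert (0 <= hnorm x * hnorm y) by nra.
  apply Rabs_le. split; nra.
Qed.

Lemma nsq_add x y : nsq (hadd x y) = nsq x + nsq y + 2 * Re (inner x y).
Proof. unfold nsq. inner_expand. rewrite (inner_conj_sym H x y). Csimpl. ring. Qed.

Lemma parallelogram x y : nsq (hsub x y) + nsq (hadd x y) = 2 * nsq x + 2 * nsq y.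
Proof. unfold nsq. inner_expand. rewrite (inner_conj_sym H x y). Csimpl. ring. Qed.

Lemma sqrt_le_of_sq (s p : R) : 0 <= s -> 0 <= p -> s <= p * p -> sqrt s <= p.
Proof. intros. rewrite <- (sqrt_square p) by assumption. apply sqrt_le_1_alt. assumption. Qed.

Lemma hnorm_triangle x y : hnorm (hadd x y) <= hnorm x + hnorm y.
Proof.
  pose proof (hnorm_nonneg x). pose proof (hnorm_nonneg y).
  apply sqrt_le_of_sq; [apply nsq_nonneg | lra |].
  change (nsq (hadd x y) <= (hnorm x + hnorm y) * (hnorm x + hnorm y)).
  rewrite nsq_add. pose proof (Re_inner_le x y). pose proof (hnorm_sq x). pose proof (hnorm_sq y).
  pose proof (Rle_abs (Re (inner x y))). nra.
Qed.

Lemma nsq_scal a x : nsq (hscal a x) = Cmod2 a * nsq x.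
Proof.
  unfold nsq, Cmod2. inner_expand. pose proof (Im_inner_self x) as I. Csimpl. rewrite I. ring.
Qed.

Lemma hnorm_scal a x : hnorm (hscal a x) = sqrt (Cmod2 a) * hnorm x.
Proof.
  unfold hnorm. change (sqrt (nsq (hscal a x)) = sqrt (Cmod2 a) * sqrt (nsq x)).
  rewrite nsq_scal. apply sqrt_mult; [apply Cmod2_nonneg | apply nsq_nonneg].
Qed.

Lemma hnorm_sub_sym x y : hnorm (hsub x y) = hnorm (hsub y x).
Proof.
  replace (hsub y x) with (hscal (mkC (-1) 0) (hsub x y)) by vec_eq.
  rewrite hnorm_scal. unfold Cmod2; simpl. replace (-1 * -1 + 0 * 0) with 1 by ring.
  rewrite sqrt_1. ring.
Qed.

Lemma hnorm_sub_le x y : hnorm (hsub x y) <= hnorm x + hnorm y.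
Proof.
  replace (hsub x y) with (hadd x (hsub hzero y)) by vec_eq.
  eapply Rle_trans; [apply hnorm_triangle|].
  rewrite hnorm_sub_sym. replace (hsub y hzero) with y by vec_eq. lra.
Qed.

Lemma hnorm_sub_tri x y z : hnorm (hsub x z) <= hnorm (hsub x y) + hnorm (hsub y z).
Proof. replace (hsub x z) with (hadd (hsub x y) (hsub y z)) by vec_eq. apply hnorm_triangle. Qed.

Lemma hnorm_le_sub x y : hnorm x <= hnorm y + hnorm (hsub x y).
Proof. replace x with (hadd y (hsub x y)) at 1 by vec_eq. apply hnorm_triangle. Qed.

End Norm.

Lemma le_of_forall_eps (a b : R) : (forall eps, 0 < eps -> a < b + eps) -> a <= b.
Proof.
  intro Hf. destruct (Rle_dec a b) as [h|h]; [exact h|].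
  exfalso. specialize (Hf ((a - b) / 2)). lra.
Qed.

Lemma small_inv (K eps : R) : 0 <= K -> 0 < eps ->
  exists N, forall n, (N <= n)%nat -> K / (INR n + 1) < eps.
Proof.
  intros HK He. destruct (INR_archimed eps K He) as [N HN]. exists N. intros n Hn.
  apply le_INR in Hn. pose proof (pos_INR N).
  apply Rmult_lt_reg_r with (INR n + 1); [lra|].
  unfold Rdiv. rewrite Rmult_assoc, Rinv_l by lra. nra.
Qed.

Lemma small_sq (C eps : R) : 0 <= C -> 0 < eps ->
  exists d, 0 < d /\ forall t, 0 <= t -> t < d -> C * (t * t) < eps.
Proof.
  intros HC He. exists (Rmin 1 (eps / (C + 1))). split.
  - apply Rmin_pos; [lra | apply Rdiv_lt_0_compat; lra].
  - intros t Ht Htd. pose proof (Rmin_l 1 (eps / (C+1))). pose proof (Rmin_r 1 (eps / (C+1))).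
    assert (t * (C + 1) < eps).
    { apply Rmult_lt_reg_r with (/ (C+1)); [apply Rinv_0_lt_compat; lra|].
      rewrite Rmult_assoc, Rinv_r by lra. unfold Rdiv in *. lra. }
    nra.
Qed.

Lemma eventually_and (P Q : nat -> Prop) :
  (exists N, forall n, (N <= n)%nat -> P n) -> (exists N, forall n, (N <= n)%nat -> Q n) ->
  exists N, forall n, (N <= n)%nat -> P n /\ Q n.
Proof.
  intros [N1 H1] [N2 H2]. exists (Nat.max N1 N2). intros n Hn.
  split; [apply H1 | apply H2]; lia.
Qed.

Section Sequences.
Variable H : HilbertSpace.

Lemma cauchy_converges (u : nat -> H) (K : R) : 0 <= K ->
  (forall m n, hnorm (hsub (u m) (u n)) <= K / (INR m + 1) + K / (INR n + 1)) ->
  exists l, converges u l.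
Proof.
  intros HK Hb. apply (complete H u). intros eps He.
  destruct (small_inv K (eps/2) HK) as [N HN]; [lra|].
  exists N. intros m n Hm Hn.
  pose proof (Hb m n). pose proof (HN m Hm). pose proof (HN n Hn).
  change (hnorm (hsub (u m) (u n)) < eps). lra.
Qed.

Lemma dense_seq (P : H -> Prop) (y : H) : dense P ->
  exists xs : nat -> H, (forall n, P (xs n)) /\
    (forall n, hnorm (hsub y (xs n)) < 1 / (INR n + 1)).
Proof.
  intro D.
  assert (Hn : forall n : nat, exists x, P x /\ hnorm (hsub y x) < 1 / (INR n + 1)).
  { intro n. apply D. pose proof (pos_INR n). apply Rdiv_lt_0_compat; lra. }
  destruct (functional_choice _ Hn) as [xs Hxs]. exists xs. split; intro n; apply Hxs.
Qed.

Lemma rate_converges (xs : nat -> H) (y : H) :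
  (forall n, hnorm (hsub y (xs n)) < 1 / (INR n + 1)) -> converges xs y.
Proof.
  intros Hx eps He. destruct (small_inv 1 eps ltac:(lra) He) as [N HN].
  exists N. intros n Hn. rewrite hnorm_sub_sym. specialize (Hx n). specialize (HN n Hn). lra.
Qed.

Lemma rate_cauchy (xs : nat -> H) (y : H) :
  (forall n, hnorm (hsub y (xs n)) < 1 / (INR n + 1)) ->
  forall m n, hnorm (hsub (xs m) (xs n)) <= 1 / (INR m + 1) + 1 / (INR n + 1).
Proof.
  intros Hx m n. eapply Rle_trans; [apply (hnorm_sub_tri _ _ y) |].
  rewrite hnorm_sub_sym. pose proof (Hx m). pose proof (Hx n). lra.
Qed.

Lemma converges_add (u v : nat -> H) a b :
  converges u a -> converges v b -> converges (fun n => hadd (u n) (v n)) (hadd a b).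
Proof.
  intros Hu Hv eps He.
  destruct (eventually_and _ _ (Hu (eps/2) ltac:(lra)) (Hv (eps/2) ltac:(lra))) as [N HN].
  exists N. intros n Hn. destruct (HN n Hn).
  replace (hsub (hadd (u n) (v n)) (hadd a b)) with (hadd (hsub (u n) a) (hsub (v n) b))
    by vec_eq.
  eapply Rle_lt_trans; [apply hnorm_triangle | lra].
Qed.

Lemma converges_scal (u : nat -> H) a c :
  converges u a -> converges (fun n => hscal c (u n)) (hscal c a).
Proof.
  intros Hu eps He. set (k := sqrt (Cmod2 c)). assert (Hk : 0 <= k) by apply sqrt_pos.
  destruct (Hu (eps / (k + 1))) as [N HN]; [apply Rdiv_lt_0_compat; lra|].
  exists N. intros n Hn. specialize (HN n Hn).
  replace (hsub (hscal c (u n)) (hscal c a)) with (hscal c (hsub (u n) a)) by vec_eq.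
  rewrite hnorm_scal. fold k. pose proof (hnorm_nonneg _ (hsub (u n) a)).
  assert (hnorm (hsub (u n) a) * (k + 1) < eps).
  { apply Rmult_lt_reg_r with (/ (k+1)); [apply Rinv_0_lt_compat; lra|].
    rewrite Rmult_assoc, Rinv_r by lra. unfold Rdiv in HN. lra. }
  nra.
Qed.

Lemma limit_norm_le (u : nat -> H) l c : converges u l ->
  (forall eps, 0 < eps -> exists N, forall n, (N <= n)%nat -> hnorm (u n) < c + eps) ->
  hnorm l <= c.
Proof.
  intros Hu Hb. apply le_of_forall_eps. intros eps He.
  destruct (eventually_and _ _ (Hu (eps/2) ltac:(lra)) (Hb (eps/2) ltac:(lra))) as [N HN].
  destruct (HN N (le_n N)) as [Hd Hn].
  pose proof (hnorm_le_sub _ l (u N)). rewrite hnorm_sub_sym in Hd. lra.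
Qed.

Definition Ccv (a : nat -> Cplx) (l : Cplx) : Prop :=
  forall eps, 0 < eps -> exists N, forall n, (N <= n)%nat -> Cmod2 (Cadd (a n) (Copp l)) < eps.

Lemma Ccv_limits_eq (a b : nat -> Cplx) la lb :
  Ccv a la -> Ccv b lb -> (forall n, a n = b n) -> la = lb.
Proof.
  intros Ha Hb Hab. apply Cmod2_eq. apply le_of_forall_eps. intros eps He. rewrite Rplus_0_l.
  destruct (eventually_and _ _ (Ha (eps/4) ltac:(lra)) (Hb (eps/4) ltac:(lra))) as [N HN].
  destruct (HN N (le_n N)) as [A1 B1]. rewrite Hab in A1.
  unfold Cmod2 in *. destruct (b N) as [p q]. destruct la as [l1 l2]. destruct lb as [m1 m2].
  Csimpl. pose proof (Rle_0_sqr (p - l1 + (p - m1))). pose proof (Rle_0_sqr (q - l2 + (q - m2))).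
  unfold Rsqr in *. nra.
Qed.

Lemma inner_converges (u : nat -> H) l (t : H) :
  converges u l -> Ccv (fun n => inner t (u n)) (inner t l).
Proof.
  intros Hu eps He.
  destruct (small_sq (nsq t) eps (nsq_nonneg _ t) He) as [d [Hd Hd2]].
  destruct (Hu d Hd) as [N HN]. exists N. intros n Hn.
  replace (Cadd (inner t (u n)) (Copp (inner t l))) with (inner t (hsub (u n) l))
    by (inner_expand; Cring).
  eapply Rle_lt_trans; [apply cauchy_schwarz|]. rewrite <- (hnorm_sq _ (hsub (u n) l)).
  apply Hd2; [apply hnorm_nonneg | apply HN; exact Hn].
Qed.

End Sequences.

(** ** Riesz representation of bounded linear functionals

    If [f] is linear and bounded, either [f = 0] or the affine hyperplane
    [{v | f v = 1}] has an element [w0] of minimal norm; [w0] is orthogonal to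
    [ker f], and [w0 / |w0|^2] represents [f]. *)

Section Riesz.
Variable H : HilbertSpace.
Variable f : H -> Cplx.
Variable K : R.
Hypothesis f_add : forall x y, f (hadd x y) = Cadd (f x) (f y).
Hypothesis f_scal : forall a x, f (hscal a x) = Cmul a (f x).
Hypothesis f_bounded : forall x, Cmod2 (f x) <= K * nsq x.

Lemma functional_zero : f hzero = C0.
Proof.
  pose proof (f_add hzero hzero) as E. rewrite hadd_0 in E.
  destruct (f hzero) as [a b]. unfold Cadd in E. injection E. intros. apply Cext; simpl; lra.
Qed.

Lemma functional_sub (x y : H) : f (hsub x y) = Cadd (f x) (Copp (f y)).
Proof.
  replace (hsub x y) with (hadd x (hscal (mkC (-1) 0) y)) by vec_eq.
  rewrite f_add, f_scal. Cring.
Qed.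

Lemma functional_limit (u : nat -> H) l c : converges u l -> (forall n, f (u n) = c) -> f l = c.
Proof.
  intros Hu Hc. apply Cmod2_eq. apply le_of_forall_eps. intros eps He. rewrite Rplus_0_l.
  destruct (small_sq (Rabs K) eps (Rabs_pos K) He) as [d [Hd Hd2]].
  destruct (Hu d Hd) as [N HN]. specialize (HN N (le_n N)). rewrite hnorm_sub_sym in HN.
  pose proof (f_bounded (hsub l (u N))) as B. rewrite functional_sub, Hc in B.
  specialize (Hd2 _ (hnorm_nonneg _ _) HN). rewrite hnorm_sq in Hd2.
  pose proof (Rle_abs K). pose proof (nsq_nonneg _ (hsub l (u N))).
  assert (K * nsq (hsub l (u N)) <= Rabs K * nsq (hsub l (u N))) by nra.
  lra.
Qed.

Lemma hyperplane_infimum (e : H) : f e = C1 ->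
  exists d2, 0 <= d2 /\ (forall v, f v = C1 -> d2 <= nsq v) /\
    (forall eps, 0 < eps -> exists v, f v = C1 /\ nsq v < d2 + eps).
Proof.
  intro He.
  set (D := fun r => exists v, f v = C1 /\ r = - nsq v).
  destruct (completeness D) as [m [Hub Hlub]].
  { exists 0. intros r [v [_ ->]]. pose proof (nsq_nonneg _ v). lra. }
  { exists (- nsq e). exists e. auto. }
  exists (- m). split; [|split].
  - assert (m <= 0); [|lra]. apply Hlub. intros r [v [_ ->]]. pose proof (nsq_nonneg _ v). lra.
  - intros v Hv. assert (D (- nsq v)) as Dv by (exists v; auto). specialize (Hub _ Dv). lra.
  - intros eps Heps. apply NNPP. intro Hn.
    assert (Hb : is_upper_bound D (m - eps)).
    { intros r [v [Hv ->]]. destruct (Rle_dec (- nsq v) (m - eps)) as [h|h]; [exact h|].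
      exfalso. apply Hn. exists v. split; [exact Hv | lra]. }
    specialize (Hlub _ Hb). lra.
Qed.

(** The hyperplane [f = 1], when nonempty, has an element of minimal norm: a
    minimizing sequence is Cauchy by the parallelogram law. *)
Lemma hyperplane_minimizer (e : H) : f e = C1 ->
  exists w0, f w0 = C1 /\ forall v, f v = C1 -> nsq w0 <= nsq v.
Proof.
  intro He. destruct (hyperplane_infimum e He) as [d2 [Hd2 [Hlow Happrox]]].
  set (r := fun n : nat => 1 / (INR n + 1)).
  assert (Hr : forall n, 0 < r n).
  { intro n. pose proof (pos_INR n). unfold r. apply Rdiv_lt_0_compat; lra. }
  assert (Hseq : forall n, exists v, f v = C1 /\ nsq v < d2 + r n * r n).
  { intro n. apply Happrox. pose proof (Hr n). nra. }
  destruct (functional_choice _ Hseq) as [vs Hvs].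
  assert (Hcauchy : forall p q,
    hnorm (hsub (vs p) (vs q)) <= 2 / (INR p + 1) + 2 / (INR q + 1)).
  { intros p q. destruct (Hvs p) as [fp np]. destruct (Hvs q) as [fq nq].
    assert (Hmid : f (hscal (mkC (1/2) 0) (hadd (vs p) (vs q))) = C1).
    { rewrite f_scal, f_add, fp, fq. apply Cext; Csimpl; field. }
    apply Hlow in Hmid. rewrite nsq_scal in Hmid. unfold Cmod2 in Hmid; simpl in Hmid.
    pose proof (parallelogram _ (vs p) (vs q)).
    replace (2 / (INR p + 1) + 2 / (INR q + 1)) with (2 * r p + 2 * r q)
      by (unfold r; pose proof (pos_INR p); pose proof (pos_INR q); field; lra).
    pose proof (Hr p). pose proof (Hr q).
    apply sqrt_le_of_sq; [apply nsq_nonneg | lra |].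
    change (nsq (hsub (vs p) (vs q)) <= (2 * r p + 2 * r q) * (2 * r p + 2 * r q)). nra. }
  destruct (cauchy_converges _ vs 2 ltac:(lra) Hcauchy) as [w0 Hw0].
  exists w0. split.
  - apply (functional_limit vs); [exact Hw0 | intro n; apply Hvs].
  - assert (Hnorm : hnorm w0 <= sqrt d2).
    { apply (limit_norm_le _ vs); [exact Hw0|]. intros eps Heps.
      destruct (small_inv 1 eps ltac:(lra) Heps) as [N HN]. exists N. intros n Hn.
      specialize (HN n Hn). fold (r n) in HN. destruct (Hvs n) as [_ Hv].
      assert (hnorm (vs n) <= sqrt d2 + r n).
      { apply sqrt_le_of_sq; [apply nsq_nonneg | pose proof (sqrt_pos d2); pose proof (Hr n); lra |].
        pose proof (sqrt_sqrt d2 Hd2).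
        assert (0 <= sqrt d2 * r n) by (apply Rmult_le_pos; [apply sqrt_pos | apply Rlt_le, Hr]).
        change (nsq (vs n) <= (sqrt d2 + r n) * (sqrt d2 + r n)). nra. }
      lra. }
    intros v Hv. specialize (Hlow v Hv). rewrite <- hnorm_sq.
    pose proof (hnorm_nonneg _ w0). pose proof (sqrt_sqrt d2 Hd2). nra.
Qed.

Lemma minimizer_orthogonal (w0 : H) : f w0 = C1 -> (forall v, f v = C1 -> nsq w0 <= nsq v) ->
  forall k, f k = C0 -> inner w0 k = C0.
Proof.
  intros Hf Hmin k Hk. set (c := inner w0 k).
  set (nk := nsq k). assert (Hnk : 0 <= nk) by apply nsq_nonneg.
  set (s := 1 / (nk + 1)).
  assert (Hs : 0 < s) by (unfold s; apply Rdiv_lt_0_compat; lra).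
  assert (Hsn : s * nk < 1).
  { unfold s. apply Rmult_lt_reg_r with (nk + 1); [lra|].
    replace (1 / (nk + 1) * nk * (nk + 1)) with nk by (field; lra). lra. }
  set (v := hsub w0 (hscal (Cmul (mkC s 0) c) k)).
  assert (Hfv : f v = C1) by (unfold v; rewrite functional_sub, f_scal, Hk, Hf; Cring).
  specialize (Hmin v Hfv).
  assert (Ev : nsq v = nsq w0 - 2 * s * Cmod2 c + s * s * Cmod2 c * nk).
  { unfold v, nk, nsq, Cmod2, c. clearbody s. inner_expand. rewrite (inner_conj_sym H w0 k).
    pose proof (Im_inner_self _ k) as I1.
    destruct (inner w0 k) as [c1 c2]. destruct (inner k k) as [k1 k2].
    destruct (inner w0 w0) as [w1 w2]. Csimpl. rewrite I1. ring. }
  pose proof (Cmod2_nonneg c).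
  assert (s * (s * nk - 2) < 0) by nra.
  assert (0 <= Cmod2 c * (s * (s * nk - 2))) by nra.
  apply Cmod2_zero. nra.
Qed.

Lemma riesz : exists w, forall u, f u = inner u w.
Proof.
  destruct (classic (forall u, f u = C0)) as [Hall|Hex].
  { exists hzero. intro u. rewrite Hall, inner_zero_r. reflexivity. }
  apply not_all_ex_not in Hex. destruct Hex as [x0 Hx0].
  assert (He : f (hscal (Cinv (f x0)) x0) = C1) by (rewrite f_scal; apply Cinv_l; exact Hx0).
  destruct (hyperplane_minimizer _ He) as [w0 [Hf Hmin]].
  pose proof (minimizer_orthogonal w0 Hf Hmin) as Hperp.
  assert (Hn0 : 0 < nsq w0).
  { destruct (Rlt_dec 0 (nsq w0)) as [h|h]; [exact h|]. exfalso.
    assert (Z : nsq w0 = 0) by (pose proof (nsq_nonneg _ w0); lra).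
    apply nsq_eq0 in Z. rewrite Z, functional_zero in Hf. unfold C0, C1 in Hf.
    injection Hf. lra. }
  exists (hscal (mkC (1 / nsq w0) 0) w0). intro u.
  assert (Hk : f (hsub u (hscal (f u) w0)) = C0) by (rewrite functional_sub, f_scal, Hf; Cring).
  specialize (Hperp _ Hk). inner_expand_in Hperp. inner_expand.
  rewrite (inner_conj_sym H w0 u).
  pose proof (Im_inner_self _ w0) as I2. unfold nsq in *.
  destruct (inner w0 u) as [p1 p2]. destruct (f u) as [a1 a2]. destruct (inner w0 w0) as [n1 n2].
  simpl in *. subst n2. Csimpl. injection Hperp. intros E1 E2.
  apply Cext; simpl.
  - replace p1 with (a1 * n1) by lra. field. lra.
  - replace p2 with (- a2 * n1) by lra. field. lra.
Qed.

End Riesz.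

Section Operators.
Variable H : HilbertSpace.
Implicit Types S T : Op H.

Lemma lin_zero T : is_linop T -> T hzero hzero.
Proof. intros [h _]. exact h. Qed.

Lemma lin_add T x1 y1 x2 y2 : is_linop T -> T x1 y1 -> T x2 y2 -> T (hadd x1 x2) (hadd y1 y2).
Proof. intros [_ [h _]]. apply h. Qed.

Lemma lin_scal T a x y : is_linop T -> T x y -> T (hscal a x) (hscal a y).
Proof. intros [_ [_ [h _]]]. apply h. Qed.

Lemma lin_fun T x y1 y2 : is_linop T -> T x y1 -> T x y2 -> y1 = y2.
Proof. intros [_ [_ [_ h]]]. apply h. Qed.

Lemma lin_sub T x1 y1 x2 y2 : is_linop T -> T x1 y1 -> T x2 y2 -> T (hsub x1 x2) (hsub y1 y2).
Proof.
  intros L h1 h2. replace (hsub x1 x2) with (hadd x1 (hscal (mkC (-1) 0) x2)) by vec_eq.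
  replace (hsub y1 y2) with (hadd y1 (hscal (mkC (-1) 0) y2)) by vec_eq.
  apply lin_add; auto. apply lin_scal; auto.
Qed.

Lemma sa_sym T x u y v : selfadjoint T -> T x u -> T y v -> inner u y = inner x v.
Proof. intros [_ [_ E]] h1 h2. apply E in h2. exact (h2 x u h1). Qed.

Lemma sa_adj T y z : selfadjoint T -> adjoint T y z -> T y z.
Proof. intros [_ [_ E]] h. apply E. exact h. Qed.

Lemma linop_mul S T : is_linop S -> is_linop T -> is_linop (op_mul S T).
Proof.
  intros LS LT. split; [|split; [|split]].
  - exists hzero. split; apply lin_zero; auto.
  - intros x1 y1 x2 y2 [m1 [a1 b1]] [m2 [a2 b2]]. exists (hadd m1 m2).
    split; apply lin_add; eauto.
  - intros a x y [m [h1 h2]]. exists (hscal a m). split; apply lin_scal; eauto.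
  - intros x y1 y2 [m1 [a1 b1]] [m2 [a2 b2]].
    assert (m1 = m2) by (apply (lin_fun T x); auto). subst. apply (lin_fun S m2); auto.
Qed.

Lemma linop_shift T lam : is_linop T -> is_linop (op_shift T lam).
Proof.
  intros LT. split; [|split; [|split]].
  - exists hzero. split; [apply lin_zero; auto | vec_eq].
  - intros x1 y1 x2 y2 [w1 [a1 ->]] [w2 [a2 ->]]. exists (hadd w1 w2).
    split; [apply lin_add; auto | vec_eq].
  - intros a x y [w [h ->]]. exists (hscal a w). split; [apply lin_scal; auto | vec_eq].
  - intros x y1 y2 [w1 [a1 ->]] [w2 [a2 ->]].
    assert (w1 = w2) by (eapply lin_fun; eauto). subst. reflexivity.
Qed.

Lemma in_resolvent_op_eq S T lam : op_eq S T -> in_resolvent S lam -> in_resolvent T lam.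
Proof.
  intros E. assert (E2 : forall x y, op_shift S lam x y <-> op_shift T lam x y).
  { intros x y. split; intros [w [h1 h2]]; exists w; split; auto; apply E; auto. }
  intros [I [Su [M B]]]. split; [|split].
  - intros x1 x2 y h1 h2. apply E2 in h1. apply E2 in h2. eapply I; eauto.
  - intro y. destruct (Su y) as [x h]. exists x. apply E2. auto.
  - exists M. intros x y h. apply B. unfold op_inv in *. apply E2. auto.
Qed.

Lemma resolvent_function T lam : in_resolvent T lam ->
  exists (b : H -> H) M, (forall y, op_shift T lam (b y) y) /\
    (forall x y, op_shift T lam x y -> b y = x) /\ (forall y, hnorm (b y) <= M * hnorm y).
Proof.
  intros [Inj [Sur [M Bd]]]. destruct (functional_choice _ Sur) as [b Hb].
  exists b, M. split; [exact Hb | split].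
  - intros x y h. eapply Inj; [apply Hb | exact h].
  - intro y. apply Bd. apply Hb.
Qed.

End Operators.

(** ** The resolvent set of the adjoint

    If [lam] is in the resolvent set of [T], then [conj lam] is in that of [T^*]:
    with [b = (T - lam)^-1], [(T^* - conj lam) w = z] forces [(u, w) = (b u, z)]
    for all [u], which gives injectivity and the bound, while Riesz representation
    of the bounded functional [u |-> (b u, z)] solves [(T^* - conj lam) w = z]. *)

Section AdjointResolvent.
Variable H : HilbertSpace.
Variable T : Op H.
Variable lam : Cplx.
Variable b : H -> H.
Variable M : R.
Hypothesis T_linear : is_linop T.
Hypothesis b_solves : forall y, op_shift T lam (b y) y.
Hypothesis b_unique : forall x y, op_shift T lam x y -> b y = x.
Hypothesis b_bounded : forall y, hnorm (b y) <= M * hnorm y.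

Lemma adjoint_shift_repr w z :
  op_shift (adjoint T) (Cconj lam) w z -> forall u, inner u w = inner (b u) z.
Proof.
  intros [w' [Ha ->]] u. destruct (b_solves u) as [v [Tv Eu]].
  rewrite Eu at 1. specialize (Ha _ _ Tv). inner_expand. rewrite Ha. Cring.
Qed.

Lemma adjoint_shift_onto z : exists w, op_shift (adjoint T) (Cconj lam) w z.
Proof.
  assert (LS : is_linop (op_shift T lam)) by (apply linop_shift; exact T_linear).
  destruct (riesz H (fun u => inner (b u) z) (M * M * nsq z)) as [w Hw].
  - intros x y. simpl. rewrite (b_unique _ _ (lin_add _ _ _ _ _ _ LS (b_solves x) (b_solves y))).
    apply inner_add_l.
  - intros a x. simpl. rewrite (b_unique _ _ (lin_scal _ _ a _ _ LS (b_solves x))).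
    apply inner_scal_l.
  - intro x. eapply Rle_trans; [apply cauchy_schwarz|].
    pose proof (b_bounded x). pose proof (hnorm_nonneg _ (b x)). pose proof (hnorm_sq _ (b x)).
    pose proof (hnorm_sq _ x). pose proof (nsq_nonneg _ z).
    assert (nsq (b x) <= M * M * nsq x) by nra. nra.
  - exists w. exists (hadd z (hscal (Cconj lam) w)). split; [|vec_eq].
    intros x v Tv.
    assert (E : b (hsub v (hscal lam x)) = x) by (apply b_unique; exists v; auto).
    pose proof (Hw (hsub v (hscal lam x))) as R. simpl in R. rewrite E in R.
    inner_expand_in R. inner_expand. rewrite R. Cring.
Qed.

Lemma adjoint_shift_injective : injective_op (op_shift (adjoint T) (Cconj lam)).
Proof.
  intros w1 w2 z h1 h2. apply vec_ext_r. intro u.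
  rewrite (adjoint_shift_repr _ _ h1), (adjoint_shift_repr _ _ h2). reflexivity.
Qed.

Lemma adjoint_shift_inverse_bounded : bounded_op (op_inv (op_shift (adjoint T) (Cconj lam))).
Proof.
  exists (Rabs M). intros z w h. unfold op_inv in h.
  pose proof (adjoint_shift_repr _ _ h w) as Hrepr.
  pose proof (hnorm_nonneg _ w). pose proof (hnorm_nonneg _ z). pose proof (Rabs_pos M).
  assert (Hn : hnorm w * hnorm w <= hnorm w * (Rabs M * hnorm z)).
  { rewrite hnorm_sq. unfold nsq. rewrite Hrepr.
    eapply Rle_trans; [apply Rle_abs|]. eapply Rle_trans; [apply Re_inner_le|].
    pose proof (b_bounded w). pose proof (Rle_abs M). pose proof (hnorm_nonneg _ (b w)).
    assert (hnorm (b w) <= Rabs M * hnorm w) by nra. nra. }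
  destruct (Req_dec (hnorm w) 0) as [Z|Z]; [rewrite Z; nra|].
  apply Rmult_le_reg_l with (hnorm w); [lra | nra].
Qed.

End AdjointResolvent.

Lemma resolvent_adjoint {H : HilbertSpace} (T : Op H) lam : is_linop T -> in_resolvent T lam ->
  in_resolvent (adjoint T) (Cconj lam).
Proof.
  intros LT R. destruct (resolvent_function _ _ _ R) as [b [M [Hb [Hu Hbd]]]].
  split; [|split].
  - exact (adjoint_shift_injective _ T lam b Hb).
  - exact (adjoint_shift_onto _ T lam b M LT Hb Hu Hbd).
  - exact (adjoint_shift_inverse_bounded _ T lam b M Hb Hbd).
Qed.

Section ProductAdjoint.
Variable H : HilbertSpace.
Variables A G : Op H.
Hypothesis A_sa : selfadjoint A.
Hypothesis G_sa : selfadjoint G.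

Lemma GA_sub_adjoint_AG y z : op_mul G A y z -> adjoint (op_mul A G) y z.
Proof.
  intros [u [Ay Gu]] x w [t [Gx At]].
  rewrite (sa_sym _ A t w y u A_sa At Ay). exact (sa_sym _ G x t u z G_sa Gx Gu).
Qed.

(** If [G] is onto (e.g. boundedly invertible), then [(AG)^* = GA]. *)
Lemma adjoint_AG_of_invertible : boundedly_invertible G -> op_eq (adjoint (op_mul A G)) (op_mul G A).
Proof.
  intros [_ [Sur _]].
  assert (G_onto : forall v, exists x, G x v).
  { intro v. destruct (Sur v) as [x [w [Gw ->]]]. exists x.
    replace (hsub w (hscal C0 x)) with w by vec_eq. exact Gw. }
  intros y z. split; [|apply GA_sub_adjoint_AG].
  intro adj. destruct (G_onto z) as [g Gg]. exists g. split; [|exact Gg].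
  apply (sa_adj _ A); auto. intros t w Atw. destruct (G_onto t) as [x Gx].
  rewrite (adj x w (ex_intro _ t (conj Gx Atw))). symmetry. exact (sa_sym _ G x t g z G_sa Gx Gg).
Qed.

Lemma adjoint_GA_of_total : (forall y, dom G y) -> op_eq (adjoint (op_mul G A)) (op_mul A G).
Proof.
  intros tot y z. split.
  - intro adj. destruct (tot y) as [t Gy]. exists t. split; auto.
    apply (sa_adj _ A); auto. intros x u Axu. destruct (tot u) as [w Guw].
    pose proof (adj x w (ex_intro _ u (conj Axu Guw))) as E.
    rewrite (sa_sym _ G u w y t G_sa Guw Gy) in E. exact E.
  - intros [t [Gy At]] x w [u [Ax Gu]].
    rewrite (sa_sym _ G u w y t G_sa Gu Gy). exact (sa_sym _ A x u t z A_sa Ax At).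
Qed.

End ProductAdjoint.

(** A bounded selfadjoint operator is everywhere defined: its values on a dense
    approximating sequence form a Cauchy sequence, whose limit is the value of
    [G^* = G] at the limit point. *)
Lemma bounded_selfadjoint_total {H : HilbertSpace} (G : Op H) :
  selfadjoint G -> bounded_op G -> forall y, dom G y.
Proof.
  intros SG [M Bd] y. pose proof SG as [LG [DG _]].
  destruct (dense_seq _ _ y DG) as [xs [Hd Hx]].
  destruct (functional_choice _ Hd) as [gs Hg].
  destruct (cauchy_converges _ gs (Rabs M) (Rabs_pos M)) as [g Hgl].
  { intros m n. eapply Rle_trans; [apply Bd; apply lin_sub; auto|].
    pose proof (rate_cauchy _ xs y Hx m n). pose proof (Rle_abs M).
    pose proof (hnorm_nonneg _ (hsub (xs m) (xs n))). pose proof (pos_INR m). pose proof (pos_INR n).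
    replace (Rabs M / (INR m + 1) + Rabs M / (INR n + 1))
      with (Rabs M * (1 / (INR m + 1) + 1 / (INR n + 1))) by (field; lra).
    eapply Rle_trans with (Rabs M * hnorm (hsub (xs m) (xs n))); [nra|].
    apply Rmult_le_compat_l; [apply Rabs_pos | assumption]. }
  exists g. apply (sa_adj _ G); auto. intros x t Gxt.
  apply (Ccv_limits_eq (fun n => inner t (xs n)) (fun n => inner x (gs n))).
  - apply inner_converges. apply rate_converges. exact Hx.
  - apply inner_converges. exact Hgl.
  - intro n. exact (sa_sym _ G x t (xs n) (gs n) SG Gxt (Hg n)).
Qed.

(** ** Extension by closedness

    If a closed operator [T] admits, on a dense set [D], a linear and bounded
    family [P] of solutions of [(T - lam) p = x], then [T - lam] is onto with
    the same bound: solutions for general [y] are limits of solutions for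
    approximations of [y] in [D]. *)
Lemma closed_shift_onto {H : HilbertSpace} (T : Op H) lam (D : H -> Prop) (P : H -> H -> Prop)
  (M : R) : closed_op T -> dense D -> 0 <= M ->
  (forall x, D x -> exists p, P x p) ->
  (forall x p, P x p -> op_shift T lam p x) ->
  (forall x1 p1 x2 p2, P x1 p1 -> P x2 p2 -> P (hsub x1 x2) (hsub p1 p2)) ->
  (forall x p, P x p -> hnorm p <= M * hnorm x) ->
  forall y, exists p, op_shift T lam p y /\ hnorm p <= M * hnorm y.
Proof.
  intros Tcl DD HM Ptot Psolves Psub Pbd y.
  destruct (dense_seq _ _ y DD) as [xs [Hd Hx]].
  destruct (functional_choice _ (fun n => Ptot (xs n) (Hd n))) as [ps Hps].
  destruct (cauchy_converges _ ps M HM) as [p Hp].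
  { intros m n. eapply Rle_trans; [apply Pbd, Psub; apply Hps|].
    pose proof (rate_cauchy _ xs y Hx m n). pose proof (pos_INR m). pose proof (pos_INR n).
    replace (M / (INR m + 1) + M / (INR n + 1)) with (M * (1 / (INR m + 1) + 1 / (INR n + 1)))
      by (field; lra).
    apply Rmult_le_compat_l; auto. }
  exists p. split.
  - assert (Tps : forall n, T (ps n) (hadd (xs n) (hscal lam (ps n)))).
    { intro n. destruct (Psolves _ _ (Hps n)) as [w [Tw Ew]].
      replace (hadd (xs n) (hscal lam (ps n))) with w; [exact Tw | rewrite Ew; vec_eq]. }
    exists (hadd y (hscal lam p)). split; [|vec_eq].
    exact (Tcl _ _ p _ Tps Hp
      (converges_add _ _ _ _ _ (rate_converges _ xs y Hx) (converges_scal _ _ _ lam Hp))).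
  - apply (limit_norm_le _ ps); [exact Hp|]. intros eps He.
    destruct (small_inv M eps HM He) as [N HN]. exists N. intros n Hn.
    specialize (HN n Hn). pose proof (Pbd _ _ (Hps n)) as B.
    pose proof (hnorm_le_sub _ (xs n) y) as Hxn. rewrite hnorm_sub_sym in Hxn.
    pose proof (Hx n). pose proof (pos_INR n).
    assert (M * hnorm (hsub y (xs n)) <= M / (INR n + 1)).
    { unfold Rdiv. rewrite <- (Rmult_1_l (/ (INR n + 1))). fold (1 / (INR n + 1)).
      apply Rmult_le_compat_l; lra. }
    nra.
Qed.

Lemma hscal_Cinv_l {H : HilbertSpace} lam (x : H) : lam <> C0 -> hscal (Cinv lam) (hscal lam x) = x.
Proof. intro Hl. rewrite hscal_assoc, Cinv_l by exact Hl. apply hscal_1. Qed.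

Lemma hscal_Cinv_r {H : HilbertSpace} lam (x : H) : lam <> C0 -> hscal lam (hscal (Cinv lam) x) = x.
Proof.
  intro Hl. rewrite hscal_assoc. replace (Cmul lam (Cinv lam)) with (Cmul (Cinv lam) lam) by Cring.
  rewrite Cinv_l by exact Hl. apply hscal_1.
Qed.

(** ** Condition (d): from [rho(AG)] to [rho(GA)]

    Let [lam <> 0] be in the resolvent set of [AG].  For [x] in [dom A] the
    resolvent identity suggests the solution
    [p = lam^-1 (G (AG - lam)^-1 A x - x)] of [(GA - lam) p = x]; boundedness of
    [G (AG - lam)^-1 A] makes this a bounded solution operator on the dense
    set [dom A], which extends by closedness of [GA]. *)

Section ConditionD.
Variable H : HilbertSpace.
Variables A G : Op H.
Variable lam : Cplx.
Variable M : R.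
Hypothesis A_sa : selfadjoint A.
Hypothesis G_sa : selfadjoint G.
Hypothesis AG_injective : injective_op (op_shift (op_mul A G) lam).
Hypothesis AG_onto : surjective_op (op_shift (op_mul A G) lam).
Hypothesis lam_nonzero : lam <> C0.
Hypothesis GA_closed : closed_op (op_mul G A).
Hypothesis GRA_bounded : forall x y,
  op_mul G (op_mul (op_inv (op_shift (op_mul A G) lam)) A) x y -> hnorm y <= M * hnorm x.

Definition approx_solution (x p : H) : Prop :=
  exists a y s, A x a /\ op_shift (op_mul A G) lam y a /\ G y s /\ p = hscal (Cinv lam) (hsub s x).

Lemma approx_solution_total x : dom A x -> exists p, approx_solution x p.
Proof.
  intros [a Ax]. destruct (AG_onto a) as [y [w [[s [Gy As]] Ea]]].
  exists (hscal (Cinv lam) (hsub s x)), a, y, s. repeat split; auto.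
  exists w. split; auto. exists s. auto.
Qed.

Lemma approx_solution_solves x p : approx_solution x p -> op_shift (op_mul G A) lam p x.
Proof.
  pose proof A_sa as [LA _]. pose proof G_sa as [LG _].
  intros [a [y [s [Ax [[w [[s' [Gy' As']] Ea]] [Gy ->]]]]]].
  assert (s' = s) by (apply (lin_fun _ G y); auto). subst s'.
  exists s. split.
  - exists y. split; [|exact Gy].
    assert (E : hscal (Cinv lam) (hsub w a) = y).
    { subst a. replace (hsub w (hsub w (hscal lam y))) with (hscal lam y) by vec_eq.
      apply hscal_Cinv_l, lam_nonzero. }
    rewrite <- E. apply lin_scal; auto. apply lin_sub; auto.
  - rewrite hscal_Cinv_r by exact lam_nonzero. vec_eq.
Qed.

Lemma approx_solution_sub x1 p1 x2 p2 :
  approx_solution x1 p1 -> approx_solution x2 p2 -> approx_solution (hsub x1 x2) (hsub p1 p2).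
Proof.
  pose proof A_sa as [LA _]. pose proof G_sa as [LG _].
  assert (LS : is_linop (op_shift (op_mul A G) lam)) by (apply linop_shift, linop_mul; auto).
  intros [a1 [y1 [s1 [A1 [S1 [G1 ->]]]]]] [a2 [y2 [s2 [A2 [S2 [G2 ->]]]]]].
  exists (hsub a1 a2), (hsub y1 y2), (hsub s1 s2).
  repeat split; [apply lin_sub; auto .. | vec_eq].
Qed.

Lemma approx_solution_bounded x p : approx_solution x p ->
  hnorm p <= sqrt (Cmod2 (Cinv lam)) * (Rabs M + 1) * hnorm x.
Proof.
  intros [a [y [s [Ax [Sy [Gy ->]]]]]].
  assert (Hs : hnorm s <= M * hnorm x).
  { apply GRA_bounded. exists y. split; auto. exists a. split; auto. }
  rewrite hnorm_scal. pose proof (hnorm_sub_le _ s x).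
  pose proof (sqrt_pos (Cmod2 (Cinv lam))). pose proof (Rle_abs M). pose proof (hnorm_nonneg _ x).
  assert (hnorm (hsub s x) <= (Rabs M + 1) * hnorm x) by nra.
  rewrite Rmult_assoc. apply Rmult_le_compat_l; auto.
Qed.

(** [GA - lam] is injective: if [(GA - lam) x = 0] then [A x] solves
    [(AG - lam) (A x) = 0], so [A x = 0] and [lam x = G A x = 0]. *)
Lemma GA_shift_injective : injective_op (op_shift (op_mul G A) lam).
Proof.
  pose proof A_sa as [LA _]. pose proof G_sa as [LG _].
  assert (LGA : is_linop (op_shift (op_mul G A) lam)) by (apply linop_shift, linop_mul; auto).
  intros x1 x2 y h1 h2.
  pose proof (lin_sub _ _ _ _ _ _ LGA h1 h2) as h.
  replace (hsub y y) with (@hzero H) in h by vec_eq. set (d := hsub x1 x2) in h.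
  destruct h as [v [[a [Ad Ga]] Ev]].
  assert (Ev' : v = hscal lam d).
  { replace v with (hadd (hsub v (hscal lam d)) (hscal lam d)) by vec_eq. rewrite <- Ev. vec_eq. }
  assert (Sa : op_shift (op_mul A G) lam a hzero).
  { exists (hscal lam a). split; [|vec_eq]. exists v. split; auto. rewrite Ev'. apply lin_scal; auto. }
  assert (a = hzero) by (eapply AG_injective; [exact Sa | apply lin_zero, linop_shift, linop_mul; auto]).
  subst a. assert (Hv : v = hzero) by (apply (lin_fun _ G hzero); auto; apply lin_zero; auto).
  assert (Hd : d = hzero).
  { rewrite <- (hscal_Cinv_l lam d lam_nonzero), <- Ev', Hv. vec_eq. }
  replace x1 with (hadd x2 d) by (unfold d; vec_eq). rewrite Hd. apply hadd_0.
Qed.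

Lemma resolvent_GA_of_AG : in_resolvent (op_mul G A) lam.
Proof.
  pose proof A_sa as [_ [DA _]].
  set (K := sqrt (Cmod2 (Cinv lam)) * (Rabs M + 1)).
  assert (HK : 0 <= K).
  { unfold K. pose proof (sqrt_pos (Cmod2 (Cinv lam))). pose proof (Rabs_pos M). nra. }
  pose proof (closed_shift_onto _ lam _ approx_solution K GA_closed DA HK
    approx_solution_total approx_solution_solves approx_solution_sub
    approx_solution_bounded) as Onto.
  split; [exact GA_shift_injective | split].
  - intro y. destruct (Onto y) as [p [h _]]. exists p. exact h.
  - exists K. intros y x h. unfold op_inv in h. destruct (Onto y) as [p [hp Bp]].
    rewrite (GA_shift_injective _ _ _ h hp). exact Bp.
Qed.

End ConditionD.

Theorem mainTheorem3 (H : HilbertSpace) (A G : Op H)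
  (hA : selfadjoint A) (hG : selfadjoint G) :
  ( (bounded_op G /\ resolvent_nonempty (op_mul G A))
    \/ (boundedly_invertible G /\ resolvent_nonempty (op_mul A G))
    \/ (op_eq (adjoint (op_mul A G)) (op_mul G A) /\ resolvent_nonempty (op_mul A G))
    \/ (resolvent_nonempty (op_mul A G) /\ closed_op (op_mul G A) /\
        exists lam : Cplx, in_resolvent (op_mul A G) lam /\ lam <> C0 /\
          bounded_op (op_mul G (op_mul (op_inv (op_shift (op_mul A G) lam)) A))) ) ->
  resolvent_nonempty (op_mul A G) /\ resolvent_nonempty (op_mul G A).
Proof.
  pose proof hA as [LA _]. pose proof hG as [LG _].
  assert (LAG : is_linop (op_mul A G)) by (apply linop_mul; auto).
  assert (LGA : is_linop (op_mul G A)) by (apply linop_mul; auto).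
  intros [[Gb [lam R]] | [[Gi [lam R]] | [[E [lam R]] | [R0 [Hcl [lam [R [Hl [M Bd]]]]]]]]].
  - (* (a): [AG = (GA)^*] since [G] is everywhere defined *)
    split; [|exists lam; exact R]. exists (Cconj lam).
    apply (in_resolvent_op_eq _ (adjoint (op_mul G A))); [|apply resolvent_adjoint; auto].
    apply adjoint_GA_of_total; auto. apply bounded_selfadjoint_total; auto.
  - (* (b): [GA = (AG)^*] since [G] is onto *)
    split; [exists lam; exact R|]. exists (Cconj lam).
    apply (in_resolvent_op_eq _ (adjoint (op_mul A G))); [|apply resolvent_adjoint; auto].
    apply adjoint_AG_of_invertible; auto.
  -
    split; [exists lam; exact R|]. exists (Cconj lam).
    apply (in_resolvent_op_eq _ (adjoint (op_mul A G))); [exact E | apply resolvent_adjoint; auto].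
  -
    split; [exact R0|]. exists lam. destruct R as [Inj [Sur _]].
    exact (resolvent_GA_of_AG H A G lam M hA hG Inj Sur Hl Hcl Bd).
Qed.
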